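(* Let $n\ge 3$. Then $I(\mathring H_{2,n})\simeq\mathbb{S}^2$, $I(\mathring H_{3,n})\simeq\mathbb{S}^3$, and $I(\mathring H_{k,n})\simeq\Sigma^2 I(H_{k-2,n})$ for all $k\ge 4$.
   Context: $P_k$ is the path with vertices $u_1,\dots,u_k$; $K_n$ is the complete graph on $\{1,\dots,n\}$; $P_k\times K_n$ is the categorical product (vertices $(u_i,j)$, with $(u_i,a)$ adjacent to $(u_{i'},b)$ iff $|i-i'|=1$ and $a\ne b$). For $k\ge 2$, $H_{k,n}$ is obtained from $P_k\times K_n$ by adding new vertices $v_1,v_2$ and the edges $(u_1,i)v_1$ for all $i\ge2$ and $(u_k,i)v_2$ for all $i\ne2$; $\mathring H_{k,n}$ is obtained from $H_{k,n}$ by adding new vertices $w_1,w_2$ and the edges $v_1w_1$, $v_2w_2$. $I(G)$ is the independence complex (simplices = non-empty independent vertex sets); $\Sigma$ is suspension. *)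

From HB Require Import structures.
From mathcomp Require Import all_boot all_order all_algebra.
From mathcomp Require Import Rstruct.
Set Implicit Arguments. Unset Strict Implicit. Unset Printing Implicit Defensive.
Import Order.TTheory GRing.Theory Num.Theory.
Local Open Scope ring_scope.

Notation R := Rdefinitions.R.

(* Vertex (u_i, j) of P_k x K_n is (i-1, j-1) : 'I_k * 'I_n (0-based). *)
Definition grid_adj (k n : nat) (p q : 'I_k * 'I_n) : bool :=
  (((p.1 : nat).+1 == q.1) || ((q.1 : nat).+1 == p.1)) && (p.2 != q.2).

(* H_{k,n}: vertices ('I_k * 'I_n) + 'I_2 ; inr 0 = v_1, inr 1 = v_2.
   Edges (u_1,i)v_1 for i >= 2 (0-based: j <> 0) and
         (u_k,i)v_2 for i <> 2  (0-based: j <> 1). *)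
Definition ext_adj (k n : nat) (p : 'I_k * 'I_n) (e : nat) : bool :=
  ((e == 0%N) && ((p.1 : nat) == 0%N) && ((p.2 : nat) != 0%N))
  || ((e == 1%N) && ((p.1 : nat) == k.-1) && ((p.2 : nat) != 1%N)).

Definition H_vert (k n : nat) : finType := (('I_k * 'I_n) + 'I_2)%type.

Definition H_adj (k n : nat) : rel (H_vert k n) := fun x y =>
  match x, y with
  | inl p, inl q => grid_adj p q
  | inl p, inr e => @ext_adj k n p e
  | inr e, inl p => @ext_adj k n p e
  | inr _, inr _ => false
  end.

(* Hring_{k,n} (the paper's H with a ring): vertices ('I_k * 'I_n) + 'I_4 ;
   inr 0 = v_1, inr 1 = v_2, inr 2 = w_1, inr 3 = w_2; extra edges
   v_1 w_1 and v_2 w_2. *)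
Definition Hring_vert (k n : nat) : finType := (('I_k * 'I_n) + 'I_4)%type.

Definition extra_adj (e f : nat) : bool :=
  ((e == 0%N) && (f == 2%N)) || ((e == 2%N) && (f == 0%N))
  || ((e == 1%N) && (f == 3%N)) || ((e == 3%N) && (f == 1%N)).

Definition Hring_adj (k n : nat) : rel (Hring_vert k n) := fun x y =>
  match x, y with
  | inl p, inl q => grid_adj p q
  | inl p, inr e => @ext_adj k n p e
  | inr e, inl p => @ext_adj k n p e
  | inr e, inr f => extra_adj e f
  end.

Definition indep_complex (V : finType) (adj : rel V) : pred {set V} :=
  fun s => (s != set0) && [forall x in s, forall y in s, ~~ adj x y].

(* Simplicial suspension: join with two new points (inr false/true). *)
Definition susp (V : finType) (K : pred {set V}) : pred {set (V + bool)%type} :=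
  fun s =>
    (s != set0)
    && (((inl @^-1: s) == set0) || K (inl @^-1: s))
    && (#|(inr @^-1: s) : {set bool}| <= 1)%N.

(* Spaces are subsets of R^U (U finite) with the sup metric.            *)

Definition space (U : finType) := (U -> R) -> Prop.

Definition realization (V : finType) (K : pred {set V}) : space V :=
  fun x => (forall v, 0 <= x v) /\ \sum_(v : V) x v = 1
           /\ K [set v | x v != 0].

Definition sphere (d : nat) : space 'I_d.+1 :=
  fun x => \sum_(i < d.+1) x i ^+ 2 = 1.

Definition maps_into (U V : finType) (A : space U) (B : space V)
  (f : (U -> R) -> (V -> R)) : Prop := forall x, A x -> B (f x).

Definition cont_on (U V : finType) (A : space U)
  (f : (U -> R) -> (V -> R)) : Prop :=
  forall x, A x -> forall e : R, 0 < e -> exists2 d : R, 0 < d &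
    forall y, A y -> (forall u, `|x u - y u| < d) ->
      forall v, `|f x v - f y v| < e.

Definition homotopic (U V : finType) (A : space U) (B : space V)
  (f0 f1 : (U -> R) -> (V -> R)) : Prop :=
  exists H : R -> (U -> R) -> (V -> R),
    [/\ forall t x, 0 <= t <= 1 -> A x -> B (H t x),
        forall x, A x -> H 0 x = f0 x,
        forall x, A x -> H 1 x = f1 x &
        forall t x, 0 <= t <= 1 -> A x -> forall e : R, 0 < e ->
          exists2 d : R, 0 < d &
            forall s y, 0 <= s <= 1 -> A y -> `|t - s| < d ->
              (forall u, `|x u - y u| < d) ->
              forall v, `|H t x v - H s y v| < e].

Definition homotopy_equiv (U V : finType) (A : space U) (B : space V) : Prop :=
  exists (f : (U -> R) -> (V -> R)) (g : (V -> R) -> (U -> R)),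
    [/\ maps_into A B f, cont_on A f, maps_into B A g & cont_on B g]
    /\ homotopic A A (fun x => g (f x)) id
    /\ homotopic B B (fun y => f (g y)) id.

Definition I_H (k n : nat) : space (H_vert k n) :=
  realization (indep_complex (@H_adj k n)).
Definition I_Hring (k n : nat) : space (Hring_vert k n) :=
  realization (indep_complex (@Hring_adj k n)).
Definition susp2_I_H (k n : nat) : space ((H_vert k n + bool) + bool)%type :=
  realization (susp (susp (indep_complex (@H_adj k n)))).

(* Each equivalence comes from vertex maps f, g between independence complexes
   that send non-edges to non-edges and for which g \o f and f \o g are
   contiguous to the identity: every face s spans a face with its image.  The
   straight-line homotopy then joins the realization of g \o f to the identity.
   In Hring_{k,n} the neighbourhood of w_1 is {v_1}, so every (u_1,j), j <> 1,
   folds onto w_1, and likewise every (u_k,j), j <> 2, onto w_2.  What remains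
   is H_{k-2,n} on the rows u_2 .. u_{k-1}, with (u_1,1) and (u_k,2) in the
   roles of v_1 and v_2, together with the two disjoint edges v_1 w_1 and
   v_2 w_2, each of which suspends the independence complex.  For k = 2, 3 the
   folded graph reduces further to a perfect matching with k + 1 edges, whose
   independence complex is the boundary of the cross-polytope; radial
   projection maps it homeomorphically onto the sphere. *)

From Pilot Require Import Defs.
From HB Require Import structures.
From mathcomp Require Import all_boot all_order all_algebra.
From mathcomp Require Import Rstruct ring lra zify.
From Stdlib Require Import FunctionalExtensionality.
Import Defs.
Set Implicit Arguments. Unset Strict Implicit. Unset Printing Implicit Defensive.
Import Order.TTheory GRing.Theory Num.Theory.

Local Open Scope ring_scope.

(** * Homotopies between maps of subspaces of R^U *)

Section Continuity.

Variables U V : finType.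
Implicit Types (A : space U) (B : space V).

Definition dist1 (x y : U -> R) : R := \sum_u `|x u - y u|.

Lemma ler_dist1 (x y : U -> R) u : `|x u - y u| <= dist1 x y.
Proof. by rewrite /dist1 (bigD1 u) //= lerDl sumr_ge0. Qed.

Lemma dist1_lt (x y : U -> R) d :
  (forall u, `|x u - y u| < d) -> dist1 x y <= #|U|%:R * d.
Proof.
move=> h; have : dist1 x y <= \sum_(u : U) d by apply: ler_sum => u _; apply: ltW.
by rewrite sumr_const mulr_natl.
Qed.

Definition jointly_continuous A (H : R -> (U -> R) -> (V -> R)) : Prop :=
  forall t x, 0 <= t <= 1 -> A x -> forall e : R, 0 < e ->
    exists2 d : R, 0 < d &
      forall s y, 0 <= s <= 1 -> A y -> `|t - s| < d ->
        (forall u, `|x u - y u| < d) ->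
        forall v, `|H t x v - H s y v| < e.

Lemma cont_on_jointly_continuous A (f : (U -> R) -> (V -> R)) :
  jointly_continuous A (fun _ => f) -> cont_on A f.
Proof.
have t0 : 0 <= (0 : R) <= 1 by rewrite lexx ler01.
move=> hf x Ax e e0; have [d d0 hd] := hf 0 x t0 Ax e e0.
exists d => // y Ay hxy; apply: (hd 0) => //.
by rewrite subrr normr0.
Qed.

Lemma lipschitz_jointly_continuous A H (C : R) : 0 <= C ->
  (forall t s x y, 0 <= t <= 1 -> 0 <= s <= 1 -> A x -> A y -> forall v,
      `|H t x v - H s y v| <= C * (`|t - s| + dist1 x y)) ->
  jointly_continuous A H.
Proof.
move=> C0 hH t x ht Ax e e0.
have N0 : 0 <= (#|U|%:R : R) by rewrite ler0n.
set M := C * (#|U|%:R + 1).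
have M0 : 0 <= M by rewrite mulr_ge0 //; lra.
have eM0 : 0 < e / (M + 1) by rewrite divr_gt0 //; lra.
exists (e / (M + 1)) => // s y hs Ay hts hxy v.
apply: le_lt_trans (hH t s x y ht hs Ax Ay v) _.
apply: (@le_lt_trans _ _ (M * (e / (M + 1)))).
  rewrite /M -mulrA ler_wpM2l // mulrDl mul1r addrC.
  by have := dist1_lt hxy; have := ltW hts; lra.
have -> : M * (e / (M + 1)) = e - e / (M + 1) by field; lra.
lra.
Qed.

Lemma lipschitz_cont_on A (f : (U -> R) -> (V -> R)) (C : R) : 0 <= C ->
  (forall x y, A x -> A y -> forall v, `|f x v - f y v| <= C * dist1 x y) ->
  cont_on A f.
Proof.
move=> C0 hf; apply/cont_on_jointly_continuous/(lipschitz_jointly_continuous C0).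
move=> t s x y _ _ Ax Ay v; apply: le_trans (hf x y Ax Ay v) _.
by rewrite ler_wpM2l // lerDr.
Qed.

Lemma jointly_continuousB A H G :
  jointly_continuous A H -> jointly_continuous A G ->
  jointly_continuous A (fun t x v => H t x v - G t x v).
Proof.
move=> hH hG t x ht Ax e e0.
have e20 : 0 < e / 2 by lra.
have [d1 d10 h1] := hH t x ht Ax _ e20; have [d2 d20 h2] := hG t x ht Ax _ e20.
exists (Num.min d1 d2) => [|s y hs Ay]; first by rewrite lt_min d10 d20.
rewrite lt_min => /andP[ts1 ts2] hxy v.
have [xy1 xy2] : (forall u, `|x u - y u| < d1) /\ (forall u, `|x u - y u| < d2).
  by split=> u; have := hxy u; rewrite lt_min => /andP[].
have := h1 s y hs Ay ts1 xy1 v; have := h2 s y hs Ay ts2 xy2 v.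
have := ler_normB (H t x v - H s y v) (G t x v - G s y v).
have -> : H t x v - G t x v - (H s y v - G s y v) =
  (H t x v - H s y v) - (G t x v - G s y v) by ring.
lra.
Qed.

Lemma jointly_continuous_reparam A H (phi : R -> R) (L : R) : 0 <= L ->
  (forall t, 0 <= t <= 1 -> 0 <= phi t <= 1) ->
  (forall t s, `|phi t - phi s| <= L * `|t - s|) ->
  jointly_continuous A H -> jointly_continuous A (fun t => H (phi t)).
Proof.
move=> L0 phi01 phiL hH t x ht Ax e e0.
have [d d0 hd] := hH (phi t) x (phi01 t ht) Ax e e0.
have dL0 : 0 < d / (L + 1) by rewrite divr_gt0 //; lra.
have dLd : d / (L + 1) <= d by rewrite ler_pdivrMr; nra.
exists (d / (L + 1)) => // s y hs Ay hts hxy v.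
apply: (hd (phi s) y) => [|//||u]; first exact: phi01.
  apply: le_lt_trans (phiL t s) _.
  have ts0 := normr_ge0 (t - s).
  have : `|t - s| * (L + 1) < d by rewrite -ltr_pdivlMr //; lra.
  nra.
exact: lt_le_trans (hxy u) dLd.
Qed.

Lemma dist_min_le (a b c : R) : `|Num.min a c - Num.min b c| <= `|a - b|.
Proof.
have h1 := ler_norm (a - b); have h2 := ler_norm (b - a); rewrite distrC in h2.
by case: (leP a c) => ha; case: (leP b c) => hb; rewrite ler_norml; lra.
Qed.

Lemma dist_max_le (a b c : R) : `|Num.max a c - Num.max b c| <= `|a - b|.
Proof.
have h1 := ler_norm (a - b); have h2 := ler_norm (b - a); rewrite distrC in h2.
by case: (leP a c) => ha; case: (leP b c) => hb; rewrite ler_norml; lra.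
Qed.

Lemma homotopic_trans A B f0 f1 f2 :
  homotopic A B f0 f1 -> homotopic A B f1 f2 -> homotopic A B f0 f2.
Proof.
move=> [H [HB H0 H1 Hc]] [G [GB G0 G1 Gc]].
(* Both halves in one formula, a combination of continuous reparametrizations. *)
pose K t x v := H (Num.min (2 * t) 1) x v - (H 1 x v - G (Num.max (2 * t - 1) 0) x v).
have K_def t x : A x -> K t x = if t <= 2^-1 then H (2 * t) x else G (2 * t - 1) x.
  move=> Ax; apply: functional_extensionality => v; rewrite /K.
  case: ifP => ht; [rewrite min_l ?max_r | rewrite min_r ?max_l]; try lra;
  by rewrite (H1 x Ax) -(G0 x Ax); lra.
have dbl (t : R) : 0 <= t <= 1 -> t <= 2^-1 -> 0 <= 2 * t <= 1.
  by move=> /andP[? ?] ?; apply/andP; split; lra.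
have dbl1 (t : R) : 0 <= t <= 1 -> ~~ (t <= 2^-1) -> 0 <= 2 * t - 1 <= 1.
  by move=> /andP[? ?]; rewrite -ltNge => ?; apply/andP; split; lra.
exists K; split.
- move=> t x ht Ax; rewrite K_def //.
  by case: ifP => h; [apply: HB; rewrite ?dbl | apply: GB; rewrite ?dbl1 ?h].
- by move=> x Ax; rewrite K_def // ifT ?mulr0 ?H0 //; lra.
- move=> x Ax; rewrite K_def // ifF; last by apply/negbTE; rewrite -ltNge; lra.
  by rewrite mulr1 (_ : 2 - 1 = 1 :> R) ?G1 //; lra.
have half_lip (phi : R -> R) : (forall t s, `|phi t - phi s| <= `|t - s|) ->
  forall t s, `|phi (2 * t) - phi (2 * s)| <= 2 * `|t - s|.
  by move=> hphi t s; apply: le_trans (hphi _ _) _; rewrite -mulrBr normrM ger0_norm.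
apply: jointly_continuousB; last apply: jointly_continuousB.
- apply: (jointly_continuous_reparam (L := 2)) => // [t /andP[t0 t1]|t s].
    by rewrite le_min ge_min ler01 lexx orbT; apply/andP; split => //; lra.
  by apply: (half_lip (fun a => Num.min a 1)) => a b; apply: dist_min_le.
- apply: (jointly_continuous_reparam (L := 0)) => // [t _|t s].
    by rewrite ler01 lexx.
  by rewrite subrr normr0 mul0r.
- apply: (jointly_continuous_reparam (L := 2)) => // [t /andP[t0 t1]|t s].
    by rewrite le_max lexx orbT ge_max ler01; apply/andP; split => //; lra.
  apply: (half_lip (fun a => Num.max (a - 1) 0)) => a b.
  by apply: le_trans (dist_max_le _ _ _) _; rewrite opprD addrACA subrr addr0.
Qed.

End Continuity.

Lemma cont_on_comp (U V W : finType) (A : space U) (B : space V)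
  (f : (U -> R) -> (V -> R)) (g : (V -> R) -> (W -> R)) :
  maps_into A B f -> cont_on A f -> cont_on B g -> cont_on A (fun x => g (f x)).
Proof.
move=> mf cf cg x Ax e e0.
have [d1 d10 h1] := cg (f x) (mf x Ax) e e0.
have [d2 d20 h2] := cf x Ax d1 d10.
by exists d2 => // y Ay hxy v; apply: h1; [exact: mf | exact: h2].
Qed.

Lemma homotopic_conj (U V : finType) (A : space U) (B : space V)
  (f : (U -> R) -> (V -> R)) (g : (V -> R) -> (U -> R)) F0 F1 :
  maps_into A B f -> cont_on A f -> maps_into B A g -> cont_on B g ->
  homotopic B B F0 F1 ->
  homotopic A A (fun x => g (F0 (f x))) (fun x => g (F1 (f x))).
Proof.
move=> mf cf mg cg [H [HB H0 H1 Hc]].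
exists (fun t x => g (H t (f x))); split.
- by move=> t x ht Ax; apply/mg/HB/mf.
- by move=> x Ax; rewrite H0 //; apply: mf.
- by move=> x Ax; rewrite H1 //; apply: mf.
move=> t x ht Ax e e0.
have HBt := HB t (f x) ht (mf x Ax).
have [d1 d10 h1] := cg (H t (f x)) HBt e e0.
have [d2 d20 h2] := Hc t (f x) ht (mf x Ax) d1 d10.
have [d3 d30 h3] := cf x Ax d2 d20.
exists (Num.min d2 d3) => [|s y hs Ay]; first by rewrite lt_min d20 d30.
rewrite lt_min => /andP[hts _] hxy v.
have hxy3 u : `|x u - y u| < d3 by move: (hxy u); rewrite lt_min => /andP[].
apply: h1; first exact/HB/mf.
by apply: h2 => //; [apply: mf | apply: h3].
Qed.

Lemma homotopy_equiv_trans (U V W : finType) (A : space U) (B : space V) (C : space W) :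
  homotopy_equiv A B -> homotopy_equiv B C -> homotopy_equiv A C.
Proof.
move=> [f1 [g1 [[mf1 cf1 mg1 cg1] [h1 h1']]]] [f2 [g2 [[mf2 cf2 mg2 cg2] [h2 h2']]]].
exists (fun x => f2 (f1 x)), (fun z => g1 (g2 z)); split; [split|split].
- by move=> x Ax; apply/mf2/mf1.
- exact: cont_on_comp mf1 cf1 cf2.
- by move=> z Cz; apply/mg1/mg2.
- exact: cont_on_comp mg2 cg2 cg1.
- exact: homotopic_trans (homotopic_conj mf1 cf1 mg1 cg1 h2) h1.
- exact: homotopic_trans (homotopic_conj mg2 cg2 mf2 cf2 h1') h2'.
Qed.

Lemma homotopic_id_of_eq (U : finType) (A : space U) (g : (U -> R) -> (U -> R)) :
  (forall x, A x -> g x = x) -> homotopic A A g id.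
Proof.
move=> gx; exists (fun _ x => x); split=> // [x Ax|]; first by rewrite gx.
apply: (@lipschitz_jointly_continuous _ _ _ _ 1) => // t s x y _ _ _ _ v.
by rewrite mul1r; apply: le_trans (ler_dist1 x y v) _; rewrite lerDr.
Qed.

(** * Simplicial maps and contiguity *)

Section SimplicialMaps.

Variables U V : finType.

Definition simplicial (K : pred {set U}) (L : pred {set V}) (f : U -> V) : Prop :=
  forall s, K s -> L (f @: s).

Definition contiguous_to_id (K : pred {set U}) (h : U -> U) : Prop :=
  forall s, K s -> K (s :|: h @: s).

(* The affine extension of a vertex map to barycentric coordinates. *)
Definition push (f : U -> V) (x : U -> R) : V -> R := fun v => \sum_(u | f u == v) x u.

Lemma sum_push (f : U -> V) (x : U -> R) : \sum_v push f x v = \sum_u x u.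
Proof. by rewrite (partition_big f predT). Qed.

Lemma support_push (f : U -> V) (x : U -> R) : (forall u, 0 <= x u) ->
  [set v | push f x v != 0] = f @: [set u | x u != 0].
Proof.
move=> x0; apply/setP => v; rewrite inE /push psumr_neq0 //.
apply/hasP/imsetP => [[u _ /andP[/eqP <- xu]]|[u]].
  by exists u; rewrite // inE gt_eqF.
by rewrite inE => xu ->; exists u; rewrite ?mem_index_enum // eqxx lt0r xu x0.
Qed.

Lemma dist1_push (f : U -> V) (x y : U -> R) : dist1 (push f x) (push f y) <= dist1 x y.
Proof.
rewrite /dist1 -(sum_push f (fun u => `|x u - y u|)).
by apply: ler_sum => v _; rewrite /push -sumrB ler_norm_sum.
Qed.

Lemma realization_ge0 (K : pred {set U}) x u : realization K x -> 0 <= x u.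
Proof. by case. Qed.

Lemma realization_le1 (K : pred {set U}) x u : realization K x -> x u <= 1.
Proof. by move=> [x0 [<- _]]; rewrite (bigD1 u) //= lerDl sumr_ge0. Qed.

Lemma realization_push (K : pred {set U}) (L : pred {set V}) (f : U -> V) :
  simplicial K L f -> maps_into (realization K) (realization L) (push f).
Proof.
move=> Kf x [x0 [x1 Kx]]; split=> [v|]; first exact: sumr_ge0.
by rewrite sum_push support_push //; split=> //; apply: Kf.
Qed.

Lemma push_lipschitz (f : U -> V) (x y : U -> R) v :
  `|push f x v - push f y v| <= 1 * dist1 x y.
Proof. by rewrite mul1r; apply: le_trans (ler_dist1 _ _ v) (dist1_push f x y). Qed.

End SimplicialMaps.

Lemma dist_convex_comb_le (t s a b p q D : R) :
  0 <= t <= 1 -> 0 <= s <= 1 -> 0 <= a <= 1 -> 0 <= p <= 1 ->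
  `|a - b| <= D -> `|p - q| <= D ->
  `|((1 - t) * a + t * p) - ((1 - s) * b + s * q)| <= 2 * (`|t - s| + D).
Proof.
move=> /andP[t0 t1] /andP[s0 s1] /andP[a0 a1] /andP[p0 p1] hab hpq.
have -> : (1 - t) * a + t * p - ((1 - s) * b + s * q) =
  ((s - t) * a + (1 - s) * (a - b)) + ((t - s) * p + s * (p - q)) by ring.
have e1 : `|(s - t) * a| <= `|t - s|.
  by rewrite normrM distrC ger0_norm // ler_piMr.
have e2 : `|(t - s) * p| <= `|t - s|.
  by rewrite normrM [`|p|]ger0_norm // ler_piMr.
have e3 : `|(1 - s) * (a - b)| <= D.
  by rewrite normrM ger0_norm; [apply: le_trans hab; rewrite ler_piMl // | ]; lra.
have e4 : `|s * (p - q)| <= D.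
  by rewrite normrM ger0_norm //; apply: le_trans hpq; rewrite ler_piMl.
apply: le_trans (ler_normD _ _) _.
have := ler_normD ((s - t) * a) ((1 - s) * (a - b)).
have := ler_normD ((t - s) * p) (s * (p - q)).
lra.
Qed.

Lemma support_convex_comb (U : finType) (t : R) (a b : U -> R) :
  0 < t < 1 -> (forall u, 0 <= a u) -> (forall u, 0 <= b u) ->
  [set u | (1 - t) * a u + t * b u != 0] = [set u | b u != 0] :|: [set u | a u != 0].
Proof.
move=> /andP[t0 t1] a0 b0; apply/setP => u; rewrite !inE.
rewrite paddr_eq0 ?mulr_ge0 ?subr_ge0 ?(ltW t0) ?(ltW t1) //.
by rewrite !mulf_eq0 subr_eq0 (gt_eqF t0) (gt_eqF t1) /= negb_and orbC.
Qed.

Section Contiguity.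

Variables (U V : finType) (K : pred {set U}) (L : pred {set V}).
Variables (f : U -> V) (g : V -> U).
Hypotheses (Kf : simplicial K L f) (Lg : simplicial L K g).

(* The straight-line homotopy stays in |K| because x and g(f(x)) lie in a common simplex. *)
Lemma contiguous_homotopic :
  contiguous_to_id K (g \o f) ->
  homotopic (realization K) (realization K) (fun x => push g (push f x)) id.
Proof.
move=> Kgf.
have Rgf x : realization K x -> realization K (push g (push f x)).
  by move=> Kx; apply/(realization_push Lg)/(realization_push Kf).
pose H t x u := (1 - t) * push g (push f x) u + t * x u.
exists H; split.
- move=> t x /andP[t0 t1] Kx.
  have [x0 [x1 xK]] := Kx; have [y0 [y1 yK]] := Rgf x Kx.
  split=> [u|]; first by rewrite /H addr_ge0 // mulr_ge0 //; lra.
  split; first by rewrite /H big_split /= -!mulr_sumr y1 x1; ring.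
  have [->|tn0] := eqVneq t 0.
    by rewrite (_ : [set u | _] = [set v | push g (push f x) v != 0]) //;
      apply/setP => v; rewrite !inE /H subr0 mul1r mul0r addr0.
  have [->|tn1] := eqVneq t 1.
    by rewrite (_ : [set u | _] = [set v | x v != 0]) //;
      apply/setP => v; rewrite !inE /H subrr mul0r mul1r add0r.
  rewrite /H support_convex_comb ?lt0r ?tn0 ?t0 ?lt_neqAle ?tn1 //.
  rewrite !support_push // => [|v]; last exact: sumr_ge0.
  by rewrite -imset_comp; apply: Kgf.
- by move=> x _; apply: functional_extensionality => u; rewrite /H subr0 mul1r mul0r addr0.
- by move=> x _; apply: functional_extensionality => u; rewrite /H subrr mul0r mul1r add0r.
apply: (@lipschitz_jointly_continuous _ _ _ H 2) => // t s x y ht hs Kx Ky v.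
apply: dist_convex_comb_le => //.
- by rewrite (realization_ge0 _ (Rgf x Kx)) (realization_le1 _ (Rgf x Kx)).
- by rewrite (realization_ge0 _ Kx) (realization_le1 _ Kx).
- by rewrite -(mul1r (dist1 _ _)); apply: le_trans (push_lipschitz _ _ _ _) _;
    rewrite !mul1r dist1_push.
- exact: ler_dist1.
Qed.

End Contiguity.

Lemma simplicial_homotopy_equiv (U V : finType) (K : pred {set U}) (L : pred {set V})
  (f : U -> V) (g : V -> U) :
  simplicial K L f -> simplicial L K g ->
  contiguous_to_id K (g \o f) -> contiguous_to_id L (f \o g) ->
  homotopy_equiv (realization K) (realization L).
Proof.
move=> Kf Lg Kgf Lfg.
exists (push f), (push g); split; [split|split].
- exact: realization_push.
- exact: lipschitz_cont_on ler01 (fun x y _ _ => push_lipschitz f x y).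
- exact: realization_push.
- exact: lipschitz_cont_on ler01 (fun x y _ _ => push_lipschitz g x y).
- exact: contiguous_homotopic Kf Lg Kgf.
- exact: contiguous_homotopic Lg Kf Lfg.
Qed.

(** * Independence complexes *)

Section IndependenceComplexes.

Variable U : finType.
Implicit Types (a : rel U) (A W : pred U).

Lemma indep_complexP a s :
  reflect (s != set0 /\ {in s &, forall x y, ~~ a x y}) (indep_complex a s).
Proof.
apply: (iffP andP) => -[s0 h]; split=> //.
  by move=> x y xs ys; have /forall_inP/(_ x xs)/forall_inP/(_ y ys) := h.
by apply/forall_inP => x xs; apply/forall_inP => y ys; apply: h.
Qed.

Definition indep_complex_on a A : pred {set U} :=
  fun s => indep_complex a s && (s \subset A).

Lemma indep_complex_on_predT a : indep_complex_on a predT = indep_complex a.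
Proof.
by apply: functional_extensionality => s; rewrite /indep_complex_on subset_predT andbT.
Qed.

Definition nonadj_contiguous a A (h : U -> U) : Prop :=
  {in A &, forall x y, ~~ a x y -> [&& ~~ a x (h y), ~~ a (h x) y & ~~ a (h x) (h y)]}.

Lemma indep_on_contiguous a A (h : U -> U) :
  {homo h : x / x \in A} -> nonadj_contiguous a A h ->
  contiguous_to_id (indep_complex_on a A) h.
Proof.
move=> hA hc s /andP[/indep_complexP[s0 sa] /subsetP sA]; apply/andP; split.
  apply/indep_complexP; split.
    by case/set0Pn: s0 => x xs; apply/set0Pn; exists x; rewrite inE xs.
  move=> x y; rewrite !inE => /orP[xs|/imsetP[x' xs ->]] /orP[ys|/imsetP[y' ys ->]];
    [exact: sa | ..]; by case/and3P: (hc _ _ (sA _ xs) (sA _ ys) (sa _ _ xs ys)).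
apply/subsetP => x; rewrite inE => /orP[/sA //|/imsetP[y ys ->]].
exact/hA/sA.
Qed.

(* A vertex whose neighbourhood contains that of [r x] can be folded onto [r x]. *)
Lemma fold_contiguous a A (r : U -> U) : symmetric a ->
  (forall x y, a (r x) y -> a x y) -> nonadj_contiguous a A r.
Proof.
move=> sym_a hr x y _ _ nxy.
have nxr : ~~ a x (r y) by apply: contra nxy; rewrite sym_a => /hr; rewrite sym_a.
by rewrite nxr (contra (hr x y) nxy) (contra (hr x (r y)) nxr).
Qed.

End IndependenceComplexes.

Definition nonadj_preserving (U V : finType) (a : rel U) (b : rel V) (A : pred U)
  (f : U -> V) : Prop :=
  {in A &, forall x y, ~~ a x y -> ~~ b (f x) (f y)}.

Lemma indep_on_simplicial (U V : finType) (a : rel U) (b : rel V) (A : pred U)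
  (B : pred V) (f : U -> V) :
  {homo f : x / x \in A >-> x \in B} -> nonadj_preserving a b A f ->
  simplicial (indep_complex_on a A) (indep_complex_on b B) f.
Proof.
move=> fAB hf s /andP[/indep_complexP[s0 sa] /subsetP sA]; apply/andP; split.
  apply/indep_complexP; split.
    by case/set0Pn: s0 => x xs; apply/set0Pn; exists (f x); apply: imset_f.
  by move=> _ _ /imsetP[x xs ->] /imsetP[y ys ->]; apply: hf; rewrite ?sA ?sa.
by apply/subsetP => _ /imsetP[x xs ->]; apply/fAB/sA.
Qed.

Lemma indep_on_homotopy_equiv (U V : finType) (a : rel U) (b : rel V)
  (A : pred U) (B : pred V) (f : U -> V) (g : V -> U) :
  {homo f : x / x \in A >-> x \in B} -> {homo g : y / y \in B >-> y \in A} ->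
  nonadj_preserving a b A f -> nonadj_preserving b a B g ->
  nonadj_contiguous a A (g \o f) -> nonadj_contiguous b B (f \o g) ->
  homotopy_equiv (realization (indep_complex_on a A)) (realization (indep_complex_on b B)).
Proof.
move=> fAB gBA af bg agf bfg.
apply: (simplicial_homotopy_equiv (f := f) (g := g)); try exact: indep_on_simplicial.
  by apply: indep_on_contiguous => // x /fAB /gBA.
by apply: indep_on_contiguous => // y /gBA /fAB.
Qed.

Lemma indep_homotopy_equiv (U V : finType) (a : rel U) (b : rel V)
  (f : U -> V) (g : V -> U) :
  (forall x y, ~~ a x y -> ~~ b (f x) (f y)) ->
  (forall x y, ~~ b x y -> ~~ a (g x) (g y)) ->
  nonadj_contiguous a predT (g \o f) -> nonadj_contiguous b predT (f \o g) ->
  homotopy_equiv (realization (indep_complex a)) (realization (indep_complex b)).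
Proof.
move=> af bg agf bfg; rewrite -indep_complex_on_predT -(indep_complex_on_predT b).
by apply: (indep_on_homotopy_equiv (f := f) (g := g)) => // x y _ _; [apply: af | apply: bg].
Qed.

Lemma fold_homotopy_equiv (U : finType) (a : rel U) (W : pred U) (r : U -> U) :
  symmetric a -> (forall x, r x \in W) -> (forall x y, a (r x) y -> a x y) ->
  homotopy_equiv (realization (indep_complex a)) (realization (indep_complex_on a W)).
Proof.
move=> sym_a rW hr; rewrite -indep_complex_on_predT.
have hc A : nonadj_contiguous a A r := fold_contiguous (A := A) sym_a hr.
apply: (indep_on_homotopy_equiv (f := r) (g := id)) => // x y xA yA nxy.
by case/and3P: (hc _ x y xA yA nxy).
Qed.

Definition susp_adj (V : finType) (a : rel V) : rel (V + bool) := fun x y =>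
  match x, y with
  | inl p, inl q => a p q
  | inr b, inr c => b != c
  | _, _ => false
  end.

Lemma susp_indep_complex (V : finType) (a : rel V) :
  susp (indep_complex a) = indep_complex (susp_adj a).
Proof.
apply: functional_extensionality => s; rewrite /susp.
have [->|s0] := eqVneq s set0; first by rewrite /indep_complex eqxx.
set L := inl @^-1: s; set B := inr @^-1: s.
have [/indep_complexP[_ sa]|nsa] := boolP (indep_complex (susp_adj a) s).
  have La : {in L &, forall x y, ~~ a x y} by move=> x y; rewrite !inE; apply: sa.
  have -> : (#|B| <= 1)%N.
    apply/card_le1_eqP => b c; rewrite !inE => bs cs.
    by have := sa _ _ bs cs; rewrite /= negbK => /eqP ->.
  by rewrite andbT /=; case: eqVneq => //= L0; apply/indep_complexP.
apply/negbTE; apply: contra nsa => /andP[/andP[_ LK] /card_le1_eqP B1].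
apply/indep_complexP; split=> // -[x|b] -[y|c] xs ys //=.
  have xL : x \in L by rewrite inE.
  case/orP: LK => [/eqP L0|/indep_complexP[_ La]]; first by rewrite L0 inE in xL.
  by apply: La; rewrite ?inE.
by have := B1 b c; rewrite !inE => /(_ xs ys) ->; rewrite eqxx.
Qed.

(** * The cross-polytope and the sphere *)

Lemma dist_quotients_le (u u' N N' c : R) :
  0 < c -> c <= N -> c <= N' -> `|u'| <= 1 ->
  `|u / N - u' / N'| <= `|u - u'| / c + `|N - N'| / c ^+ 2.
Proof.
move=> c0 cN cN' u1.
have N0 : 0 < N by apply: lt_le_trans cN.
have N0' : 0 < N' by apply: lt_le_trans cN'.
have -> : u / N - u' / N' = (u - u') / N + u' * (N' - N) / (N * N').
  by field; rewrite !gt_eqF.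
apply: le_trans (ler_normD _ _) _; apply: lerD.
  by rewrite normrM normfV (gtr0_norm N0); apply: ler_wpM2l; rewrite // lef_pV2.
rewrite normrM normfV normrM (gtr0_norm (mulr_gt0 N0 N0')) [`|N' - N|]distrC.
apply: le_trans (_ : _ <= `|N - N'| / (N * N')) _.
  by apply: ler_wpM2r; [rewrite invr_ge0 mulr_ge0 // ltW | exact: ler_piMl].
apply: ler_wpM2l => //; rewrite lef_pV2 ?posrE ?exprn_gt0 ?mulr_gt0 //.
by rewrite expr2 ler_pM // ltW.
Qed.

Lemma dist_sqrt_le (Q Q' c : R) : 0 < c -> c <= Num.sqrt Q -> c <= Num.sqrt Q' ->
  `|Num.sqrt Q - Num.sqrt Q'| <= `|Q - Q'| / (2 * c).
Proof.
move=> c0 cN cN'; rewrite ler_pdivlMr; last lra.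
have [Q0 Q0'] : 0 <= Q /\ 0 <= Q'.
  by split; apply/ltW; rewrite -sqrtr_gt0; apply: lt_le_trans c0 _.
have -> : Q - Q' = (Num.sqrt Q - Num.sqrt Q') * (Num.sqrt Q + Num.sqrt Q').
  by rewrite -subr_sqr !sqr_sqrtr.
rewrite normrM.
by apply: ler_wpM2l => //; rewrite ger0_norm; lra.
Qed.

Definition pos_part (a : R) : R := if a < 0 then 0 else a.

Lemma pos_part_ge0 a : 0 <= pos_part a.
Proof. by rewrite /pos_part; case: ltP. Qed.

Lemma pos_part_le_norm a : pos_part a <= `|a|.
Proof. by rewrite /pos_part; case: ifP => _; [exact: normr_ge0 | exact: ler_norm]. Qed.

Lemma pos_partD a : pos_part a + pos_part (- a) = `|a|.
Proof.
rewrite /pos_part oppr_lt0; case: (ltrgtP a 0) => h.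
- by rewrite add0r ltr0_norm.
- by rewrite addr0 gtr0_norm.
- by rewrite h oppr0 addr0 normr0.
Qed.

Lemma pos_partB a : pos_part a - pos_part (- a) = a.
Proof.
rewrite /pos_part oppr_lt0; case: (ltrgtP a 0) => h.
- by rewrite sub0r opprK.
- by rewrite subr0.
- by rewrite h oppr0 subr0.
Qed.

Lemma pos_part_neq0 a : pos_part a != 0 -> pos_part (- a) = 0.
Proof. by rewrite /pos_part oppr_lt0; case: (ltrgtP a 0) => [||->]; rewrite ?eqxx ?oppr0. Qed.

Lemma dist_pos_part_le a b : `|pos_part a - pos_part b| <= `|a - b|.
Proof.
have h1 := ler_norm (a - b); have h2 := ler_norm (b - a); rewrite distrC in h2.
by rewrite /pos_part; case: ltP => ha; case: ltP => hb; rewrite ler_norml; lra.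
Qed.

Lemma pos_part_divr a c : 0 < c -> pos_part (a / c) = pos_part a / c.
Proof. by move=> c0; rewrite /pos_part pmulr_llt0 ?invr_gt0 //; case: ifP; rewrite ?mul0r. Qed.

Lemma pos_part_id a : 0 <= a -> pos_part a = a.
Proof. by move=> a0; rewrite /pos_part ltNge a0. Qed.

Lemma pos_part_opp a : 0 <= a -> pos_part (- a) = 0.
Proof. by rewrite le_eqVlt /pos_part oppr_lt0 => /orP[/eqP <-|->]; rewrite ?oppr0 ?ltxx. Qed.

Section CrossPolytope.

Variable d : nat.
Local Notation V := ('I_d.+1 * bool)%type.

(* [I(cross_adj)] is the boundary of the (d+1)-dimensional cross-polytope. *)
Definition cross_adj : rel V := fun p q => (p.1 == q.1) && (p.2 != q.2).

Local Notation cross := (realization (indep_complex cross_adj)).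

(* Barycentric coordinates x on the vertices (i, b) = (-1)^(~~ b) e_i give the
   point [cross_coord x] of R^(d+1), which [to_sphere] projects radially. *)
Definition cross_coord (x : V -> R) (i : 'I_d.+1) : R := x (i, true) - x (i, false).

Definition sqnorm (y : 'I_d.+1 -> R) : R := \sum_i y i ^+ 2.

Definition to_sphere (x : V -> R) : 'I_d.+1 -> R :=
  fun i => cross_coord x i / Num.sqrt (sqnorm (cross_coord x)).

Definition from_sphere (z : 'I_d.+1 -> R) : V -> R :=
  fun p => pos_part (if p.2 then z p.1 else - z p.1) / \sum_i `|z i|.

Lemma sum_pairs (F : V -> R) : \sum_p F p = \sum_i (F (i, true) + F (i, false)).
Proof.
transitivity (\sum_i \sum_b F (i, b)); last by apply: eq_bigr => i _; rewrite big_bool.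
by rewrite pair_big; apply: eq_big => // -[].
Qed.

Lemma cross_zero x i : cross x -> x (i, true) = 0 \/ x (i, false) = 0.
Proof.
move=> [_ [_ /indep_complexP[_ h]]].
case: (eqVneq (x (i, true)) 0) => [|xt]; first by left.
case: (eqVneq (x (i, false)) 0) => [|xf]; first by right.
by move: (h (i, true) (i, false)); rewrite !inE xt xf /cross_adj /= eqxx => /(_ isT isT).
Qed.

Lemma norm_cross_coord x i : cross x -> `|cross_coord x i| = x (i, true) + x (i, false).
Proof.
move=> Kx; have x0 := realization_ge0 _ Kx.
by rewrite /cross_coord; case: (cross_zero i Kx) => ->;
  rewrite ?sub0r ?normrN ?add0r ?subr0 ?addr0 ger0_norm.
Qed.

Lemma sum_norm_cross_coord x : cross x -> \sum_i `|cross_coord x i| = 1.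
Proof.
move=> Kx; have [_ [<- _]] := Kx; rewrite sum_pairs.
by apply: eq_bigr => i _; rewrite norm_cross_coord.
Qed.

Lemma norm_cross_coord_le1 x i : cross x -> `|cross_coord x i| <= 1.
Proof.
move=> Kx; rewrite -(sum_norm_cross_coord Kx) (bigD1 i) //= lerDl.
exact: sumr_ge0.
Qed.

Lemma cross_coord_large x : cross x -> exists i, d.+1%:R^-1 <= `|cross_coord x i|.
Proof.
move=> Kx; apply/existsP; apply: contraT => /existsPn small.
have : \sum_(i < d.+1) `|cross_coord x i| < \sum_(i < d.+1) d.+1%:R^-1.
  apply: ltr_sum => [|i _]; first by apply/hasP; exists ord0; rewrite ?mem_index_enum.
  by rewrite ltNge small.
rewrite sum_norm_cross_coord // sumr_const card_ord -[_^-1 *+ _]mulr_natr.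
by rewrite mulVf ?pnatr_eq0 ?ltxx.
Qed.

Lemma sqnorm_cross_coord_ge x : cross x -> d.+1%:R^-1 ^+ 2 <= sqnorm (cross_coord x).
Proof.
move=> Kx; have [i hi] := cross_coord_large Kx.
rewrite /sqnorm (bigD1 i) //= -[cross_coord x i ^+ 2]real_normK ?num_real //.
apply: le_trans (_ : _ <= `|cross_coord x i| ^+ 2) _.
  by rewrite ler_sqr // ?nnegrE ?invr_ge0 ?ler0n.
by rewrite lerDl; apply: sumr_ge0 => j _; apply: sqr_ge0.
Qed.

Lemma sqnorm_cross_coord_gt0 x : cross x -> 0 < sqnorm (cross_coord x).
Proof.
move=> Kx; apply: lt_le_trans (sqnorm_cross_coord_ge Kx).
by rewrite exprn_gt0 // invr_gt0 ltr0n.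
Qed.

Lemma sqrt_sqnorm_cross_coord_ge x :
  cross x -> d.+1%:R^-1 <= Num.sqrt (sqnorm (cross_coord x)).
Proof.
move=> Kx; rewrite -ler_sqr ?nnegrE ?sqrtr_ge0 ?invr_ge0 ?ler0n //.
by rewrite sqr_sqrtr ?sqnorm_cross_coord_ge // ltW ?sqnorm_cross_coord_gt0.
Qed.

Lemma to_sphere_sphere : maps_into cross (@sphere d) to_sphere.
Proof.
move=> x Kx; rewrite /sphere /to_sphere.
under eq_bigr do rewrite expr_div_n.
have Q0 := sqnorm_cross_coord_gt0 Kx.
by rewrite -mulr_suml sqr_sqrtr ?mulfV ?gt_eqF // ltW.
Qed.

Lemma dist_cross_coord_le x x' i :
  `|cross_coord x i - cross_coord x' i| <= 2 * dist1 x x'.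
Proof.
have -> : cross_coord x i - cross_coord x' i =
  (x (i, true) - x' (i, true)) - (x (i, false) - x' (i, false)) by rewrite /cross_coord; ring.
apply: le_trans (ler_normB _ _) _.
by have := ler_dist1 x x' (i, true); have := ler_dist1 x x' (i, false); lra.
Qed.

Lemma dist_sqnorm_le (y y' : 'I_d.+1 -> R) D :
  (forall i, `|y i| <= 1) -> (forall i, `|y' i| <= 1) ->
  (forall i, `|y i - y' i| <= D) ->
  `|sqnorm y - sqnorm y'| <= d.+1%:R * (2 * D).
Proof.
move=> y1 y1' yD; rewrite /sqnorm -sumrB.
apply: le_trans (ler_norm_sum _ _ _) _.
have -> : d.+1%:R * (2 * D) = \sum_(i < d.+1) (2 * D).
  by rewrite sumr_const card_ord mulr_natl.
apply: ler_sum => i _; rewrite subr_sqr normrM mulrC ler_pM //.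
by apply: le_trans (ler_normD _ _) _; have := y1 i; have := y1' i; lra.
Qed.

Lemma to_sphere_lipschitz x x' i : cross x -> cross x' ->
  `|to_sphere x i - to_sphere x' i| <=
     (2 * d.+1%:R + 2 * d.+1%:R * d.+1%:R ^+ 3) * dist1 x x'.
Proof.
move=> Kx Kx'; set c : R := d.+1%:R^-1.
have c0 : 0 < c by rewrite invr_gt0 ltr0n.
have cN := sqrt_sqnorm_cross_coord_ge Kx; have cN' := sqrt_sqnorm_cross_coord_ge Kx'.
rewrite /to_sphere.
apply: le_trans (dist_quotients_le _ c0 cN cN' (norm_cross_coord_le1 i Kx')) _.
rewrite mulrDl; apply: lerD.
  have -> : 2 * d.+1%:R * dist1 x x' = 2 * dist1 x x' / c by rewrite /c invrK mulrAC.
  by apply: ler_wpM2r; rewrite ?invr_ge0 ?(ltW c0) ?dist_cross_coord_le.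
have -> : 2 * d.+1%:R * d.+1%:R ^+ 3 * dist1 x x' =
    d.+1%:R * (2 * (2 * dist1 x x')) / (2 * c) / c ^+ 2.
  by rewrite /c; field; rewrite addrC natr1 pnatr_eq0.
apply: ler_wpM2r; first by rewrite invr_ge0 exprn_ge0 ?(ltW c0).
apply: le_trans (dist_sqrt_le c0 cN cN') _.
apply: ler_wpM2r; first by rewrite invr_ge0 mulr_ge0 ?(ltW c0).
exact: dist_sqnorm_le (fun j => norm_cross_coord_le1 j Kx)
  (fun j => norm_cross_coord_le1 j Kx') (dist_cross_coord_le x x').
Qed.

Lemma sphere_norm_le1 (z : 'I_d.+1 -> R) i : sphere z -> `|z i| <= 1.
Proof.
move=> hz; rewrite -(expr_le1 (n := 2)) ?normr_ge0 // real_normK ?num_real //.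
by rewrite -hz (bigD1 i) //= lerDl; apply: sumr_ge0 => j _; apply: sqr_ge0.
Qed.

Lemma sphere_sum_norm_ge1 (z : 'I_d.+1 -> R) : sphere z -> 1 <= \sum_i `|z i|.
Proof.
move=> hz; rewrite -{1}hz; apply: ler_sum => i _.
by rewrite -real_normK ?num_real // expr2 ler_piMl ?sphere_norm_le1.
Qed.

Lemma from_sphere_cross : maps_into (@sphere d) cross from_sphere.
Proof.
move=> z hz; have S0 : 0 < \sum_i `|z i| by have := sphere_sum_norm_ge1 hz; lra.
have sum1 : \sum_p from_sphere z p = 1.
  rewrite sum_pairs /from_sphere /= -(mulfV (lt0r_neq0 S0)) mulr_suml.
  by apply: eq_bigr => i _; rewrite -mulrDl pos_partD.
split; first by move=> -[i b]; apply: divr_ge0; [case: b; apply: pos_part_ge0 | apply: ltW].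
split=> //; apply/indep_complexP; split.
  apply/negP => /eqP supp0; move: sum1; rewrite big1 => [/esym/eqP|p _].
    by rewrite oner_eq0.
  by have := in_set0 p; rewrite -supp0 inE => /negbFE/eqP.
move=> [i b] [j c]; rewrite !inE /cross_adj /= => hp hq.
apply/negP => /andP[/eqP eij hbc]; subst j.
move: hp hq; rewrite /from_sphere /= !mulf_eq0 !negb_or => /andP[hp _] /andP[hq _].
by case: b c hbc hp hq => -[] //= _ hp hq;
  [move: hq; rewrite (pos_part_neq0 hp) | move: hp; rewrite (pos_part_neq0 hq)]; rewrite eqxx.
Qed.

Lemma from_sphere_lipschitz (z z' : 'I_d.+1 -> R) p : sphere z -> sphere z' ->
  `|from_sphere z p - from_sphere z' p| <= 2 * dist1 z z'.
Proof.
move=> hz hz'; case: p => i b; rewrite /from_sphere /=.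
have hPP c : `|(if c then z i else - z i) - (if c then z' i else - z' i)| <= dist1 z z'.
  by case: c; rewrite ?ler_dist1 // -opprD normrN ler_dist1.
have P'1 c : `|pos_part (if c then z' i else - z' i)| <= 1.
  rewrite ger0_norm ?pos_part_ge0 //; apply: le_trans (pos_part_le_norm _) _.
  by case: c; rewrite ?normrN sphere_norm_le1.
have hSS : `|\sum_i `|z i| - \sum_i `|z' i| | <= dist1 z z'.
  rewrite -sumrB; apply: le_trans (ler_norm_sum _ _ _) _.
  by apply: ler_sum => j _; apply: ler_dist_dist.
apply: le_trans (dist_quotients_le (pos_part (if b then z i else - z i)) ltr01
  (sphere_sum_norm_ge1 hz) (sphere_sum_norm_ge1 hz') (P'1 b)) _.
by have := le_trans (dist_pos_part_le _ _) (hPP b); rewrite expr1n !divr1; lra.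
Qed.

Lemma from_sphere_to_sphere x : cross x -> from_sphere (to_sphere x) = x.
Proof.
move=> Kx; apply: functional_extensionality => -[i b].
have N0 : 0 < Num.sqrt (sqnorm (cross_coord x)) by rewrite sqrtr_gt0 sqnorm_cross_coord_gt0.
set N := Num.sqrt _ in N0 *.
have sum_norm : \sum_j `|to_sphere x j| = N^-1.
  rewrite /to_sphere -/N.
  under eq_bigr do rewrite normrM normfV (gtr0_norm N0).
  by rewrite -mulr_suml sum_norm_cross_coord // mul1r.
rewrite /from_sphere sum_norm /= /to_sphere -/N.
have -> : (if b then cross_coord x i / N else - (cross_coord x i / N)) =
    (if b then cross_coord x i else - cross_coord x i) / N by case: b; rewrite ?mulNr.
rewrite pos_part_divr // invrK divfK ?gt_eqF // /cross_coord.
have x0 := realization_ge0 _ Kx.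
by case: b; case: (cross_zero i Kx) => ->;
  rewrite ?sub0r ?subr0 ?opprK ?pos_part_opp ?pos_part_id.
Qed.

Lemma to_sphere_from_sphere z : sphere z -> to_sphere (from_sphere z) = z.
Proof.
move=> hz; apply: functional_extensionality => i.
have S0 : 0 < \sum_j `|z j| by have := sphere_sum_norm_ge1 hz; lra.
set S := \sum_j `|z j| in S0 *.
have coord j : cross_coord (from_sphere z) j = z j / S.
  by rewrite /cross_coord /from_sphere /= -/S -mulrBl pos_partB.
rewrite /to_sphere coord.
have -> : sqnorm (cross_coord (from_sphere z)) = S^-1 ^+ 2.
  rewrite /sqnorm; under eq_bigr do rewrite coord expr_div_n.
  by rewrite -mulr_suml hz mul1r exprVn.
by rewrite sqrtr_sqr ger0_norm ?invr_ge0 ?ltW // invrK divfK ?gt_eqF.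
Qed.

End CrossPolytope.

Lemma cross_homotopy_equiv_sphere d :
  homotopy_equiv (realization (indep_complex (@cross_adj d))) (@sphere d).
Proof.
have C0 : 0 <= 2 * d.+1%:R + 2 * d.+1%:R * d.+1%:R ^+ 3 :> R.
  by rewrite addr_ge0 ?mulr_ge0 ?exprn_ge0 ?ler0n.
exists (@to_sphere d), (@from_sphere d); split; [split|split].
- exact: to_sphere_sphere.
- exact: lipschitz_cont_on C0 (fun x y Kx Ky v => to_sphere_lipschitz v Kx Ky).
- exact: from_sphere_cross.
- exact: lipschitz_cont_on (ler0n _ 2) (fun z z' hz hz' p => from_sphere_lipschitz p hz hz').
- exact/homotopic_id_of_eq/from_sphere_to_sphere.
- exact/homotopic_id_of_eq/to_sphere_from_sphere.
Qed.

(** * The graphs Hring_{k,n} *)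

Local Close Scope ring_scope.

Lemma eq_ordE n (x y : 'I_n) : (x == y) = (x == y :> nat).
Proof. by []. Qed.

Ltac unfold_adj :=
  rewrite /= /grid_adj /ext_adj /extra_adj /cross_adj /= ?eq_ordE ?inordK /=.

(* Splits on every test left in the goal and closes the arithmetic leaves with [lia]. *)
Ltac crunch := unfold_adj;
  repeat (rewrite ?eq_ordE ?inordK /=; [case: ifP => /= ? | idtac ..]);
  unfold_adj; try lia.

Lemma grid_adj_sym k n : symmetric (@grid_adj k n).
Proof. by move=> x y; rewrite /grid_adj orbC [y.2 == _]eq_sym. Qed.

Lemma Hring_adj_sym k n : symmetric (@Hring_adj k n).
Proof.
move=> [x|e] [y|f] //=; first exact: grid_adj_sym.
by apply/idP/idP; rewrite /extra_adj; lia.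
Qed.

Section TwoRows.

Variable r : nat.
Hypothesis r2 : 2 <= r.
Local Notation G := (@Hring_adj 2 r.+1).

(* Folds (u_1,j), j <> 1, onto w_1 and (u_2,j), j <> 2, onto w_2, leaving the
   matching (u_1,1)(u_2,2), v_1 w_1, v_2 w_2. *)
Definition Hring2_to_cross (x : Hring_vert 2 r.+1) : 'I_3 * bool :=
  match x with
  | inl (i, j) =>
      if (i : nat) == 0 then (if (j : nat) == 0 then (inord 0, true) else (inord 1, true))
      else (if (j : nat) == 1 then (inord 0, false) else (inord 2, true))
  | inr e => if (e : nat) == 0 then (inord 1, false) else if (e : nat) == 1 then (inord 2, false)
             else if (e : nat) == 2 then (inord 1, true) else (inord 2, true)
  end.

Definition cross_to_Hring2 (z : 'I_3 * bool) : Hring_vert 2 r.+1 :=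
  let: (i, b) := z in
  if (i : nat) == 0 then (if b then inl (ord0, ord0) else inl (ord_max, inord 1))
  else if (i : nat) == 1 then (if b then inr (inord 2) else inr (inord 0))
  else (if b then inr (inord 3) else inr (inord 1)).

Lemma Hring2_to_cross_nonadj x y :
  ~~ G x y -> ~~ cross_adj (Hring2_to_cross x) (Hring2_to_cross y).
Proof.
case: x => [[[i hi] [j hj]] | [e he]]; case: y => [[[i' hi'] [j' hj']] | [e' he']];
rewrite /Hring2_to_cross; crunch.
Qed.

Lemma cross_to_Hring2_nonadj z z' :
  ~~ cross_adj z z' -> ~~ G (cross_to_Hring2 z) (cross_to_Hring2 z').
Proof.
by case: z => [[i hi] []]; case: z' => [[i' hi'] []]; rewrite /cross_to_Hring2; crunch.
Qed.

Lemma Hring2_roundtrip_contiguous :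
  nonadj_contiguous G predT (cross_to_Hring2 \o Hring2_to_cross).
Proof.
move=> x y _ _.
case: x => [[[i hi] [j hj]] | [e he]]; case: y => [[[i' hi'] [j' hj']] | [e' he']];
rewrite /= /Hring2_to_cross; crunch; rewrite /cross_to_Hring2; crunch.
Qed.

Lemma cross2_roundtrip_contiguous :
  nonadj_contiguous (@cross_adj 2) predT (Hring2_to_cross \o cross_to_Hring2).
Proof.
move=> z z' _ _; case: z => [[i hi] []]; case: z' => [[i' hi'] []].
all: by rewrite /= /cross_to_Hring2; crunch; rewrite /Hring2_to_cross; crunch.
Qed.

End TwoRows.

Section ThreeRows.

Variable r : nat.
Hypothesis r2 : 2 <= r.
Local Notation G := (@Hring_adj 3 r.+1).

Definition core3 : pred (Hring_vert 3 r.+1) := fun x =>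
  match x with
  | inl (i, j) => [|| (i : nat) == 1, ((i : nat) == 0) && ((j : nat) == 0) |
                     ((i : nat) == 2) && ((j : nat) == 1)]
  | inr _ => true
  end.

Definition fold3 (x : Hring_vert 3 r.+1) : Hring_vert 3 r.+1 :=
  match x with
  | inl (i, j) => if ((i : nat) == 0) && ((j : nat) != 0) then inr (inord 2)
                  else if ((i : nat) == 2) && ((j : nat) != 1) then inr (inord 3)
                  else inl (i, j)
  | inr e => inr e
  end.

Lemma fold3_core x : fold3 x \in core3.
Proof.
by case: x => [[[i hi] [j hj]] | [e he]]; rewrite unfold_in /fold3 /core3; crunch.
Qed.

Lemma fold3_adj x y : G (fold3 x) y -> G x y.
Proof.
case: x => [[[i hi] [j hj]] | [e he]]; case: y => [[[i' hi'] [j' hj']] | [e' he']];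
rewrite /fold3; crunch.
Qed.

(* In the core every (u_2,j), j <> 2, folds onto (u_2,1), leaving the matching
   (u_1,1)(u_2,2), (u_2,1)(u_3,2), v_1 w_1, v_2 w_2. *)
Definition core3_to_cross (x : Hring_vert 3 r.+1) : 'I_4 * bool :=
  match x with
  | inl (i, j) => if (i : nat) == 0 then (inord 0, true)
                  else if (i : nat) == 2 then (inord 1, false)
                  else (if (j : nat) == 1 then (inord 0, false) else (inord 1, true))
  | inr e => if (e : nat) == 0 then (inord 2, false) else if (e : nat) == 1 then (inord 3, false)
             else if (e : nat) == 2 then (inord 2, true) else (inord 3, true)
  end.

Definition cross_to_core3 (z : 'I_4 * bool) : Hring_vert 3 r.+1 :=
  let: (i, b) := z in
  if (i : nat) == 0 then (if b then inl (inord 0, inord 0) else inl (inord 1, inord 1))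
  else if (i : nat) == 1 then (if b then inl (inord 1, inord 0) else inl (inord 2, inord 1))
  else if (i : nat) == 2 then (if b then inr (inord 2) else inr (inord 0))
  else (if b then inr (inord 3) else inr (inord 1)).

Lemma core3_to_cross_nonadj : nonadj_preserving G (@cross_adj 3) core3 core3_to_cross.
Proof.
move=> x y; rewrite !unfold_in.
case: x => [[[i hi] [j hj]] | [e he]]; case: y => [[[i' hi'] [j' hj']] | [e' he']];
rewrite /core3_to_cross /core3; crunch.
Qed.

Lemma cross_to_core3_nonadj z z' :
  ~~ cross_adj z z' -> ~~ G (cross_to_core3 z) (cross_to_core3 z').
Proof.
by case: z => [[i hi] []]; case: z' => [[i' hi'] []]; rewrite /cross_to_core3; crunch.
Qed.

Lemma cross_to_core3_in z : cross_to_core3 z \in core3.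
Proof.
by case: z => [[i hi] []]; rewrite unfold_in /cross_to_core3; crunch; rewrite /core3; crunch.
Qed.

Lemma core3_roundtrip_contiguous :
  nonadj_contiguous G core3 (cross_to_core3 \o core3_to_cross).
Proof.
move=> x y; rewrite !unfold_in.
case: x => [[[i hi] [j hj]] | [e he]]; case: y => [[[i' hi'] [j' hj']] | [e' he']];
rewrite /= /core3_to_cross /core3; crunch; rewrite /cross_to_core3; crunch.
Qed.

Lemma cross3_roundtrip_contiguous :
  nonadj_contiguous (@cross_adj 3) predT (core3_to_cross \o cross_to_core3).
Proof.
move=> z z' _ _; case: z => [[i hi] []]; case: z' => [[i' hi'] []].
all: by rewrite /= /cross_to_core3; crunch; rewrite /core3_to_cross; crunch.
Qed.

End ThreeRows.

Section ManyRows.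

Variables p r : nat.
Hypothesis r2 : 2 <= r.
Local Notation G := (@Hring_adj p.+4 r.+1).
Local Notation S2H := (susp_adj (susp_adj (@H_adj p.+2 r.+1))).

(* Row u_{i+1} of Hring_{p+4,n} becomes row u_i of H_{p+2,n}; the left copy of
   [bool] is the suspension by v_1 w_1, the right one by v_2 w_2. *)
Definition Hring_to_susp2 (x : Hring_vert p.+4 r.+1) : (H_vert p.+2 r.+1 + bool) + bool :=
  match x with
  | inl (i, j) =>
      if (i : nat) == 0 then (if (j : nat) == 0 then inl (inl (inr ord0)) else inl (inr true))
      else if (i : nat) == p.+3 then (if (j : nat) == 1 then inl (inl (inr ord_max)) else inr true)
      else inl (inl (inl (inord i.-1, j)))
  | inr e => if (e : nat) == 0 then inl (inr false) else if (e : nat) == 1 then inr false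
             else if (e : nat) == 2 then inl (inr true) else inr true
  end.

Definition susp2_to_Hring (z : (H_vert p.+2 r.+1 + bool) + bool) : Hring_vert p.+4 r.+1 :=
  match z with
  | inl (inl (inl (i, j))) => inl (inord i.+1, j)
  | inl (inl (inr e)) => if (e : nat) == 0 then inl (ord0, ord0) else inl (ord_max, inord 1)
  | inl (inr b) => if b then inr (inord 2) else inr ord0
  | inr b => if b then inr ord_max else inr (inord 1)
  end.

Lemma Hring_to_susp2_nonadj x y :
  ~~ G x y -> ~~ S2H (Hring_to_susp2 x) (Hring_to_susp2 y).
Proof.
case: x => [[[i hi] [j hj]] | [e he]]; case: y => [[[i' hi'] [j' hj']] | [e' he']];
rewrite /Hring_to_susp2; crunch.
Qed.

Lemma susp2_to_Hring_nonadj z z' :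
  ~~ S2H z z' -> ~~ G (susp2_to_Hring z) (susp2_to_Hring z').
Proof.
case: z => [[[[[i hi] [j hj]] | [e he]] | b] | b];
case: z' => [[[[[i' hi'] [j' hj']] | [e' he']] | b'] | b'];
rewrite /susp2_to_Hring; crunch.
Qed.

Lemma Hring_roundtrip_contiguous :
  nonadj_contiguous G predT (susp2_to_Hring \o Hring_to_susp2).
Proof.
move=> x y _ _.
case: x => [[[i hi] [j hj]] | [e he]]; case: y => [[[i' hi'] [j' hj']] | [e' he']];
rewrite /= /Hring_to_susp2; crunch; rewrite /susp2_to_Hring; crunch.
Qed.

Lemma susp2_roundtrip_contiguous :
  nonadj_contiguous S2H predT (Hring_to_susp2 \o susp2_to_Hring).
Proof.
move=> z z' _ _.
case: z => [[[[[i hi] [j hj]] | [e he]] | b] | b];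
case: z' => [[[[[i' hi'] [j' hj']] | [e' he']] | b'] | b'];
rewrite /= /susp2_to_Hring; crunch; rewrite /Hring_to_susp2; crunch.
Qed.

End ManyRows.

Lemma I_Hring2_sphere r : 2 <= r -> homotopy_equiv (@I_Hring 2 r.+1) (@sphere 2).
Proof.
move=> r2; apply: homotopy_equiv_trans (cross_homotopy_equiv_sphere 2).
exact: indep_homotopy_equiv (Hring2_to_cross_nonadj r2) (cross_to_Hring2_nonadj r2)
  (Hring2_roundtrip_contiguous r2) (cross2_roundtrip_contiguous r2).
Qed.

Lemma I_Hring3_sphere r : 2 <= r -> homotopy_equiv (@I_Hring 3 r.+1) (@sphere 3).
Proof.
move=> r2; apply: homotopy_equiv_trans (cross_homotopy_equiv_sphere 3).
apply: homotopy_equiv_trans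
  (fold_homotopy_equiv (@Hring_adj_sym 3 r.+1) (fold3_core r2) (fold3_adj r2)) _.
rewrite -(indep_complex_on_predT (@cross_adj 3)).
apply: (indep_on_homotopy_equiv (f := @core3_to_cross r) (g := cross_to_core3 r)) => //.
- by move=> z _; apply: cross_to_core3_in.
- exact: core3_to_cross_nonadj.
- by move=> z z' _ _; apply: cross_to_core3_nonadj.
- exact: core3_roundtrip_contiguous.
- exact: cross3_roundtrip_contiguous.
Qed.

Lemma I_Hring_susp2 p r : 2 <= r ->
  homotopy_equiv (@I_Hring p.+4 r.+1) (@susp2_I_H p.+2 r.+1).
Proof.
move=> r2; rewrite /susp2_I_H !susp_indep_complex.
exact: indep_homotopy_equiv (Hring_to_susp2_nonadj r2) (susp2_to_Hring_nonadj r2)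
  (Hring_roundtrip_contiguous r2) (susp2_roundtrip_contiguous r2).
Qed.

Theorem mainTheorem16 (n : nat) :
  (3 <= n)%N ->
  [/\ homotopy_equiv (@I_Hring 2 n) (@sphere 2),
      homotopy_equiv (@I_Hring 3 n) (@sphere 3) &
      forall k : nat, (4 <= k)%N ->
        homotopy_equiv (@I_Hring k n) (@susp2_I_H (k - 2) n)].
Proof.
case: n => [//|r] r2.
split; [exact: I_Hring2_sphere | exact: I_Hring3_sphere |] => k k4.
have [p ->] : exists p, k = p.+4 by exists (k - 4); lia.
rewrite (_ : p.+4 - 2 = p.+2); last by lia.
exact: I_Hring_susp2.
Qed.
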